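(* Let $d\ge2$ and $r,s\ge1$ be integers, and $a_1,\dots,a_d,a'_1,\dots,a'_d\in k$. Let $\widetilde X(d,r)\subset\mathbb{A}^3=\mathrm{Spec}\,k[x,y,z]$ be the hypersurface $x^rz+(y^d+a_1xy^{d-1}+\dots+a_{d-1}x^{d-1}y+a_dx^d)=1$ and $\widetilde X'(d,s)$ the hypersurface $x^sz+(y^d+a'_1xy^{d-1}+\dots+a'_{d-1}x^{d-1}y+a'_dx^d)=1$. Let $W(d,r,s)$ be the variety obtained by gluing $d$ copies $\{\omega\}\times\mathbb{A}^3$ ($\omega\in H(d)$) of $\mathbb{A}^3$ with coordinates $(x,c_1,c_2)$ via the identifications, for $x\neq0$, $(\omega,x,c_1,c_2)\sim\left(\lambda,x,\,c_1+\frac{p_\omega(x)-p_\lambda(x)}{x^r},\,c_2+\frac{p'_\omega(x)-p'_\lambda(x)}{x^s}\right)$. Then there are isomorphisms $\widetilde X(d,r)\times\mathbb{A}^1\cong W(d,r,s)\cong\widetilde X'(d,s)\times\mathbb{A}^1$.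
   Context: Work over an algebraically closed field $k$ of characteristic zero. $H(d)$ denotes the group of $d$-th roots of unity in $k$. For $\omega\in H(d)$, $p_\omega(x)\in k[x]$ is the unique polynomial of degree $\le r-1$ with $p_\omega(0)=\omega$ such that there is $q_\omega(x)\in k[x]$ with $x^rq_\omega(x)+p_\omega(x)^d+a_1xp_\omega(x)^{d-1}+\dots+a_{d-1}x^{d-1}p_\omega(x)+a_dx^d=1$; similarly $p'_\omega(x)$ is the unique polynomial of degree $\le s-1$ with $p'_\omega(0)=\omega$ such that $x^s$ divides $1-(p'_\omega(x)^d+a'_1xp'_\omega(x)^{d-1}+\dots+a'_dx^d)$. *)

From HB Require Import structures.
From mathcomp Require Import all_boot all_order all_algebra.
From mathcomp Require Import mpoly.
Set Implicit Arguments. Unset Strict Implicit. Unset Printing Implicit Defensive.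
Import Order.TTheory GRing.Theory.
Local Open Scope ring_scope.

Definition binform (K : nzRingType) (d : nat) (a : nat -> K) (x y : K) : K :=
  y ^+ d + \sum_(1 <= i < d.+1) a i * x ^+ i * y ^+ (d - i).

Definition inH (K : nzRingType) (d : nat) (w : K) : Prop := w ^+ d = 1.

(* q is "p_omega": deg q <= r-1, q(0) = omega and
   x^r divides 1 - (q^d + a_1 x q^(d-1) + ... + a_d x^d). *)
Definition pspec (K : fieldType) (d r : nat) (a : nat -> K) (w : K)
    (q : {poly K}) : Prop :=
  [/\ (size q <= r)%N, q.[0] = w &
      'X^r %| (1 - (q ^+ d + \sum_(1 <= i < d.+1) a i *: ('X ^+ i * q ^+ (d - i))))].

(* The hypersurface X~(d,r) x A^1 : points (x,y,z,t) with x^r z + F(x,y) = 1. *)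
Definition XA1pt (K : nzRingType) (d r : nat) (a : nat -> K) (v : 'I_4 -> K) : Prop :=
  v (inord 0) ^+ r * v (inord 2) + binform d a (v (inord 0)) (v (inord 1)) = 1.

Definition Wrel (K : fieldType) (r s : nat) (p p' : K -> {poly K})
    (w : K) (c : 'I_3 -> K) (l : K) (c' : 'I_3 -> K) : Prop :=
  (w = l /\ forall i, c i = c' i) \/
  (let x := c (inord 0) in
   [/\ x != 0, c' (inord 0) = x,
       c' (inord 1) = c (inord 1) + ((p w).[x] - (p l).[x]) / x ^+ r &
       c' (inord 2) = c (inord 2) + ((p' w).[x] - (p' l).[x]) / x ^+ s]).

Definition evalv (K : nzRingType) (n m : nat) (F : 'I_m -> {mpoly K[n]})
    (v : 'I_n -> K) : 'I_m -> K := fun i => (F i).@[v].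

(* An isomorphism of varieties W(d,r,s) ~= Y, where Y is the closed subvariety
   of A^4 with point set Ypt:
   - Phi : a morphism W -> Y, given on each chart omega by polynomial maps
     A^3 -> A^4 landing in Y and agreeing on the gluing overlaps;
   - Psi : a morphism Y -> W, given by a finite cover of Y by principal opens
     D(g j) together with, on each D(g j), a regular map
     y |-> N j (y) / g j (y) into the chart w j; these agree modulo the gluing
     on overlaps;
   - the two composites are the identity (on points; all varieties here
     are reduced and k is algebraically closed). *)
Definition W_iso (K : fieldType) (d r s : nat) (p p' : K -> {poly K})
    (Ypt : ('I_4 -> K) -> Prop) : Prop :=
  exists (Phi : K -> 'I_4 -> {mpoly K[3]})
         (J : nat) (g : 'I_J -> {mpoly K[4]}) (w : 'I_J -> K)
         (N : 'I_J -> 'I_3 -> {mpoly K[4]}),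
  let psi j (y : 'I_4 -> K) : 'I_3 -> K := fun i => (N j i).@[y] / (g j).@[y] in
  (
      (forall o c, inH d o -> Ypt (evalv (Phi o) c)) /\
      (forall o l c c', inH d o -> inH d l -> Wrel r s p p' o c l c' ->
        evalv (Phi o) c = evalv (Phi l) c') /\
      (forall j, inH d (w j)) /\
      (forall y, Ypt y -> exists j, (g j).@[y] != 0) /\
      (forall y j j', Ypt y -> (g j).@[y] != 0 -> (g j').@[y] != 0 ->
        Wrel r s p p' (w j) (psi j y) (w j') (psi j' y)) /\
      (forall y j, Ypt y -> (g j).@[y] != 0 -> evalv (Phi (w j)) (psi j y) = y) /\
      (forall o c j, inH d o -> (g j).@[evalv (Phi o) c] != 0 ->
        Wrel r s p p' (w j) (psi j (evalv (Phi o) c)) o c)).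

From HB Require Import structures.
From mathcomp Require Import all_boot all_order all_algebra.
From mathcomp Require Import perm mpoly ring.
From Stdlib Require Import ClassicalEpsilon FunctionalExtensionality.
Set Implicit Arguments. Unset Strict Implicit. Unset Printing Implicit Defensive.
Import GRing.Theory.
Local Open Scope ring_scope.

(* The chart {w} x A^3 of W(d,r,s) is sent to X~(d,r) x A^1 by
     (x, c1, c2) |-> (x, y, z, c2 + shift_w(x, c1)),   y = p_w(x) + x^r c1,
   where z is polynomial because x^r divides 1 - F(x, p_w(x)) and y - p_w(x)
   divides F(x, y) - F(x, p_w(x)) (difference quotient Q_w).  The first three
   coordinates are compatible with the c1-part of the gluing; the shift
   shift_w = (p'_w(x) - H(x, y)) / x^s absorbs the c2-part.  Here
   H = sum_mu p'_mu(x) S_mu(x, y), where S_mu, built from Q_mu normalised at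
   (0, mu), is congruent to 1 modulo x^s on the chart mu and to 0 on the other
   charts, so x^s indeed divides p'_w(x) - H on the chart w.  Divisibility by
   powers of x is established for polynomial functions, using that in
   characteristic 0 a polynomial vanishing off {x = 0} vanishes.  The inverse is
   regular on the opens {Q_l(x, y) <> 0}, which cover the fibre x = 0, and
   {x <> 0}, where c1 = (q_l(x) - z) / Q_l(x, y), resp. (y - p_1(x)) / x^r.
   Exchanging (r, p) with (s, p') gives the second isomorphism. *)

Section PolynomialFunctions.
Variables (K : fieldType) (n : nat).
Implicit Types (f g : ('I_n -> K) -> K) (v : 'I_n -> K).

Definition polyfun f := exists P : {mpoly K[n]}, forall v, P.@[v] = f v.

Lemma polyfun_eq f g : polyfun f -> f =1 g -> polyfun g.
Proof. by case=> P hP fg; exists P => v; rewrite hP fg. Qed.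

Lemma polyfun_cst c : polyfun (fun _ => c).
Proof. by exists c%:MP => v; rewrite mevalC. Qed.

Lemma polyfun_coord i : polyfun (fun v => v i).
Proof. by exists 'X_i => v; rewrite mevalXU. Qed.

Lemma polyfunD f g : polyfun f -> polyfun g -> polyfun (fun v => f v + g v).
Proof. by case=> P hP [Q hQ]; exists (P + Q) => v; rewrite mevalD hP hQ. Qed.

Lemma polyfunM f g : polyfun f -> polyfun g -> polyfun (fun v => f v * g v).
Proof. by case=> P hP [Q hQ]; exists (P * Q) => v; rewrite mevalM hP hQ. Qed.

Lemma polyfunN f : polyfun f -> polyfun (fun v => - f v).
Proof. by case=> P hP; exists (- P) => v; rewrite mevalN hP. Qed.

Lemma polyfunB f g : polyfun f -> polyfun g -> polyfun (fun v => f v - g v).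
Proof. by move=> pf pg; apply: polyfunD pf (polyfunN pg). Qed.

Lemma polyfunX f m : polyfun f -> polyfun (fun v => f v ^+ m).
Proof. by case=> P hP; exists (P ^+ m) => v; rewrite rmorphXn /= hP. Qed.

Lemma polyfun_sum (I : Type) (s : seq I) (P : pred I) (F : I -> ('I_n -> K) -> K) :
  (forall i, polyfun (F i)) -> polyfun (fun v => \sum_(i <- s | P i) F i v).
Proof.
move=> pF; elim: s => [|i s IH].
  by apply: polyfun_eq (polyfun_cst 0) _ => v; rewrite big_nil.
case: (boolP (P i)) => Pi.
  by apply: polyfun_eq (polyfunD (pF i) IH) _ => v; rewrite big_cons Pi.
by apply: polyfun_eq IH _ => v; rewrite big_cons (negbTE Pi).
Qed.

Lemma polyfun_horner (U : {poly K}) f : polyfun f -> polyfun (fun v => U.[f v]).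
Proof.
move=> pf; apply: polyfun_eq (fun v => esym (horner_coef U (f v))).
by apply: polyfun_sum => i; apply: polyfunM (polyfun_cst _) (polyfunX _ pf).
Qed.

Lemma polyfun_ind (Q : (('I_n -> K) -> K) -> Prop) :
  (forall c, Q (fun _ => c)) -> (forall i, Q (fun v => v i)) ->
  (forall f g, Q f -> Q g -> Q (fun v => f v + g v)) ->
  (forall f g, Q f -> Q g -> Q (fun v => f v * g v)) ->
  forall f, polyfun f -> Q f.
Proof.
move=> Qc Qv QD QM f [P hP].
have QE g1 g2 : Q g1 -> g1 =1 g2 -> Q g2.
  by move=> Qg /functional_extensionality <-.
apply: (QE (fun v => P.@[v]) _ _ hP).
have Qmon (s : seq 'I_n) (m : 'X_{1..n}) : Q (fun v => \prod_(i <- s) v i ^+ m i).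
  elim: s => [|i s IH]; first by apply: (QE _ _ (Qc 1)) => v; rewrite big_nil.
  apply: (QE _ _ (QM _ _ _ IH)) => [|v]; last by rewrite big_cons.
  elim: (m i) => [|e IHe]; first by apply: (QE _ _ (Qc 1)) => v; rewrite expr0.
  by apply: (QE _ _ (QM _ _ (Qv i) IHe)) => v; rewrite exprS.
elim/mpolyind: P {hP} => [|c m P _ _ IH]; first by apply: (QE _ _ (Qc 0)) => v; rewrite meval0.
apply: (QE _ _ (QD _ _ (QM _ _ (Qc c) (Qmon _ m)) IH)) => v.
by rewrite mevalD mevalZ mevalX.
Qed.

End PolynomialFunctions.

Arguments polyfun_cst {K n} c.
Arguments polyfun_coord {K n} i.

Section PolynomialMaps.
Variable K : fieldType.

Lemma polyfun_comp n m (f : ('I_n -> K) -> K) (h : 'I_n -> ('I_m -> K) -> K) :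
  polyfun f -> (forall i, polyfun (h i)) -> polyfun (fun v => f (fun i => h i v)).
Proof.
case=> P hP /fin_all_exists [Q hQ]; exists (P \mPo [tuple Q i | i < n]) => v.
by rewrite comp_mpoly_meval -hP; apply: meval_eq => i; rewrite tnth_mktuple hQ.
Qed.

Lemma polyfun_homog n m (B : ('I_m -> K) -> K) (N : 'I_n -> ('I_m -> K) -> K)
    (f : ('I_n -> K) -> K) :
  polyfun B -> (forall i, polyfun (N i)) -> polyfun f ->
  exists k0, forall k, (k0 <= k)%N -> exists Nf, polyfun Nf /\
    forall y, B y != 0 -> Nf y = B y ^+ k * f (fun i => N i y / B y).
Proof.
move=> pB pN; move: f; apply: polyfun_ind => [c|i|f g [k1 hf] [k2 hg]|f g [k1 hf] [k2 hg]].
- exists 0%N => k _; exists (fun y => B y ^+ k * c).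
  by split=> //; apply: polyfunM (polyfunX _ pB) (polyfun_cst _).
- exists 1%N => -[//|k] _; exists (fun y => B y ^+ k * N i y); split.
    exact: polyfunM (polyfunX _ pB) (pN i).
  by move=> y By; rewrite exprSr -mulrA [B y * _]mulrC divfK.
- exists (maxn k1 k2) => k; rewrite geq_max => /andP [/hf [Nf [pf ef]] /hg [Ng [pg eg]]].
  exists (fun y => Nf y + Ng y); split; first exact: polyfunD.
  by move=> y By; rewrite ef // eg // mulrDr.
- exists (k1 + k2)%N => k le12.
  have le1 : (k1 <= k)%N := leq_trans (leq_addr k2 k1) le12.
  have [Nf [pf ef]] := hf k1 (leqnn _).
  have [|Ng [pg eg]] := hg (k - k1)%N; first by rewrite leq_subRL.
  exists (fun y => Nf y * Ng y); split; first exact: polyfunM.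
  by move=> y By; rewrite ef // eg // -{2}(subnKC le1) exprD mulrACA.
Qed.

Lemma polyfun_clear_denominators n m l (B : ('I_m -> K) -> K)
    (N : 'I_n -> ('I_m -> K) -> K) (psi : 'I_l -> ('I_n -> K) -> K) :
  polyfun B -> (forall j, polyfun (N j)) -> (forall i, polyfun (psi i)) ->
  exists (g : ('I_m -> K) -> K) (N' : 'I_l -> ('I_m -> K) -> K),
    [/\ polyfun g, forall i, polyfun (N' i), forall y, (g y != 0) = (B y != 0) &
        forall y i, B y != 0 -> N' i y / g y = psi i (fun j => N j y / B y)].
Proof.
move=> pB pN ppsi.
have /fin_all_exists [k0 hk0] := fun i => polyfun_homog pB pN (ppsi i).
(* The extra factor of B makes B ^+ k vanish exactly where B does. *)
pose k := (\max_i k0 i).+1.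
have /fin_all_exists [N' hN'] : forall i, exists Nf, polyfun Nf /\
    forall y, B y != 0 -> Nf y = B y ^+ k * psi i (fun j => N j y / B y).
  by move=> i; apply: hk0; apply/leqW/(leq_bigmax i).
exists (fun y => B y ^+ k), N'; split; first exact: polyfunX.
- by move=> i; case: (hN' i).
- by move=> y; rewrite expf_eq0.
- by move=> y i By; have [_ ->] := hN' i; rewrite // mulrC mulKf ?expf_neq0.
Qed.

Definition pt2 (x y : K) : 'I_2 -> K := fun i => if i == ord0 then x else y.

Lemma pt2_eta (v : 'I_2 -> K) : pt2 (v ord0) (v ord_max) = v.
Proof. by apply: functional_extensionality => -[[|[|//]] ?]; congr v; apply: val_inj. Qed.

Definition bipolyfun (f : K -> K -> K) := polyfun (fun v : 'I_2 -> K => f (v ord0) (v ord_max)).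

Lemma bipolyfun_comp n f (fx fy : ('I_n -> K) -> K) :
  bipolyfun f -> polyfun fx -> polyfun fy -> polyfun (fun v => f (fx v) (fy v)).
Proof.
move=> pf px py.
have := polyfun_comp (h := fun i v => pt2 (fx v) (fy v) i) pf.
by apply=> -[[|[|//]] ?]; rewrite /pt2 /=.
Qed.

End PolynomialMaps.

Section CoordinateDivisibility.
Variables (K : fieldType) (n : nat) (i0 : 'I_n).
Hypothesis char0 : [pchar K] =i pred0.
Implicit Types (f g h u : ('I_n -> K) -> K) (v : 'I_n -> K).

Local Notation upd v t := (dfwith (i := i0) v t).

Lemma dfwith_self v : upd v (v i0) = v.
Proof. by apply: functional_extensionality => i; case: dfwithP. Qed.

Lemma poly_eq0_on_nonzero (U : {poly K}) : (forall t, t != 0 -> U.[t] = 0) -> U = 0.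
Proof.
move=> U0; apply/eqP; apply: contraT => nzU.
have natr0 k : (k%:R == 0 :> K) = (k == 0)%N := (pcharf0P K).1 char0 k.
have natr_inj k l : k%:R = l%:R :> K -> k = l.
  wlog lekl : k l / (k <= l)%N => [W|].
    by case/orP: (leq_total k l) => /W // H /esym /H ->.
  move/eqP; rewrite eq_sym -subr_eq0 -natrB // natr0 subn_eq0 => lelk.
  by apply/eqP; rewrite eqn_leq lekl.
have := max_poly_roots nzU (rs := [seq k.+1%:R | k <- iota 0 (size U)]).
rewrite size_map size_iota ltnn; apply.
  by apply/allP => t /mapP [k _ ->]; apply/rootP/U0; rewrite natr0.
by rewrite map_inj_uniq ?iota_uniq // => k l /natr_inj [].
Qed.

Lemma polyfun_line f v : polyfun f -> exists U : {poly K}, forall t, U.[t] = f (upd v t).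
Proof.
move: f; apply: polyfun_ind => [c|i|f g [U hU] [V hV]|f g [U hU] [V hV]].
- by exists c%:P => t; rewrite hornerC.
- case: (eqVneq i0 i) => [<-|ne].
    by exists 'X => t; rewrite hornerX dfwith_in.
  by exists (v i)%:P => t; rewrite hornerC dfwith_out.
- by exists (U + V) => t; rewrite hornerD hU hV.
- by exists (U * V) => t; rewrite hornerM hU hV.
Qed.

Lemma polyfun_eq0 f : polyfun f -> (forall v, v i0 != 0 -> f v = 0) -> forall v, f v = 0.
Proof.
move=> pf f0 v; have [U hU] := polyfun_line v pf.
have U0 : U = 0 by apply: poly_eq0_on_nonzero => t t0; rewrite hU f0 // dfwith_in.
by rewrite -[v in f v]dfwith_self -hU U0 horner0.
Qed.

Lemma polyfun_upd f t : polyfun f -> polyfun (fun v => f (upd v t)).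
Proof.
move=> pf; apply: (polyfun_comp (h := fun i v => upd v t i)) pf _ => i.
case: (eqVneq i0 i) => [<-|ne].
  by apply: polyfun_eq (polyfun_cst t) _ => v; rewrite dfwith_in.
by apply: polyfun_eq (polyfun_coord i) _ => v; rewrite dfwith_out.
Qed.

Lemma polyfun_split f : polyfun f ->
  exists g, polyfun g /\ forall v, f v = f (upd v 0) + v i0 * g v.
Proof.
move=> pf; suff [] : polyfun f /\
    exists g, polyfun g /\ forall v, f v = f (upd v 0) + v i0 * g v by [].
move: f pf; apply: polyfun_ind => [c|i|f h [pf [g [pg eg]]] [ph [k [pk ek]]]|
                                   f h [pf [g [pg eg]]] [ph [k [pk ek]]]].
- split; first exact: polyfun_cst.
  by exists (fun _ => 0); split=> [|v]; rewrite ?mulr0 ?addr0 //; apply: polyfun_cst.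
- split; first exact: polyfun_coord.
  case: (eqVneq i0 i) => [<-|ne].
    by exists (fun _ => 1); split=> [|v]; [apply: polyfun_cst|rewrite dfwith_in add0r mulr1].
  by exists (fun _ => 0); split=> [|v]; [apply: polyfun_cst|rewrite dfwith_out // mulr0 addr0].
- split; first exact: polyfunD.
  exists (fun v => g v + k v); split=> [|v]; first exact: polyfunD.
  by rewrite {1}eg {1}ek mulrDr addrACA.
- split; first exact: polyfunM.
  exists (fun v => g v * h v + f (upd v 0) * k v); split=> [|v].
    by apply: polyfunD; apply: polyfunM => //; apply: polyfun_upd.
  by rewrite eg ek; ring.
Qed.

Definition xpow_dvd m f := exists g, polyfun g /\ forall v, f v = v i0 ^+ m * g v.

Lemma xpow_dvd_polyfun m f : xpow_dvd m f -> polyfun f.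
Proof.
case=> g [pg eg]; apply: polyfun_eq (polyfunM (polyfunX m (polyfun_coord i0)) pg) _.
by move=> v; rewrite eg.
Qed.

Lemma xpow_dvd_eq m f g : xpow_dvd m f -> f =1 g -> xpow_dvd m g.
Proof. by case=> h [ph eh] fg; exists h; split=> // v; rewrite -fg. Qed.

Lemma xpow_dvdD m f g : xpow_dvd m f -> xpow_dvd m g -> xpow_dvd m (fun v => f v + g v).
Proof.
case=> f1 [pf ef] [g1 [pg eg]]; exists (fun v => f1 v + g1 v).
by split=> [|v]; [apply: polyfunD|rewrite ef eg mulrDr].
Qed.

Lemma xpow_dvdMl m f h : polyfun h -> xpow_dvd m f -> xpow_dvd m (fun v => h v * f v).
Proof.
move=> ph [f1 [pf ef]]; exists (fun v => h v * f1 v).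
by split=> [|v]; [apply: polyfunM|rewrite ef mulrCA].
Qed.

Lemma xpow_dvdN m f : xpow_dvd m f -> xpow_dvd m (fun v => - f v).
Proof.
move=> /(xpow_dvdMl (polyfun_cst (-1))) df.
by apply: xpow_dvd_eq df _ => v; rewrite mulN1r.
Qed.

Lemma xpow_dvdM m1 m2 f g :
  xpow_dvd m1 f -> xpow_dvd m2 g -> xpow_dvd (m1 + m2) (fun v => f v * g v).
Proof.
case=> f1 [pf ef] [g1 [pg eg]]; exists (fun v => f1 v * g1 v).
by split=> [|v]; [apply: polyfunM|rewrite ef eg exprD mulrACA].
Qed.

Lemma xpow_dvdX m f e : xpow_dvd m f -> xpow_dvd (m * e) (fun v => f v ^+ e).
Proof.
move=> df; elim: e => [|e IH].
  exists (fun _ => 1); split=> [|v]; first exact: polyfun_cst.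
  by rewrite muln0 !expr0 mulr1.
by rewrite mulnS; apply: xpow_dvd_eq (xpow_dvdM df IH) _ => v; rewrite exprS.
Qed.

Lemma xpow_dvd_leq m1 m2 f : (m1 <= m2)%N -> xpow_dvd m2 f -> xpow_dvd m1 f.
Proof.
move=> le12 [g [pg eg]]; exists (fun v => v i0 ^+ (m2 - m1) * g v); split.
  exact: polyfunM (polyfunX _ (polyfun_coord i0)) pg.
by move=> v; rewrite eg mulrA -exprD subnKC.
Qed.

Lemma xpow_dvd_sum (I : eqType) (s : seq I) (P : pred I) m (F : I -> ('I_n -> K) -> K) :
  (forall i, i \in s -> P i -> xpow_dvd m (F i)) ->
  xpow_dvd m (fun v => \sum_(i <- s | P i) F i v).
Proof.
elim: s => [|i s IH] dF.
  exists (fun _ => 0); split=> [|v]; first exact: polyfun_cst.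
  by rewrite big_nil mulr0.
have dS : xpow_dvd m (fun v => \sum_(j <- s | P j) F j v).
  by apply: IH => j js; apply: dF; rewrite inE js orbT.
case: (boolP (P i)) => Pi.
  apply: xpow_dvd_eq (xpow_dvdD (dF i _ Pi) dS) _ => [|v]; first exact: mem_head.
  by rewrite big_cons Pi.
by apply: xpow_dvd_eq dS _ => v; rewrite big_cons (negbTE Pi).
Qed.

Lemma xpow_dvd_1subX m u e : xpow_dvd m u -> xpow_dvd m (fun v => 1 - (1 - u v) ^+ e).
Proof.
move=> du; elim: e => [|e IH].
  exists (fun _ => 0); split=> [|v]; first exact: polyfun_cst.
  by rewrite expr0 subrr mulr0.
have pw : polyfun (fun v => (1 - u v) ^+ e).
  exact/polyfunX/polyfunB/(xpow_dvd_polyfun du)/polyfun_cst.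
apply: xpow_dvd_eq (xpow_dvdD IH (xpow_dvdMl pw du)) _ => v.
by rewrite exprSr; ring.
Qed.

Lemma xpow_dvd_vanish f : polyfun f -> (forall v, v i0 = 0 -> f v = 0) -> xpow_dvd 1 f.
Proof.
move=> pf f0; have [g [pg eg]] := polyfun_split pf; exists g; split=> // v.
by rewrite eg f0 ?dfwith_in // add0r expr1.
Qed.

Lemma xpow_dvd_cancel m f u : polyfun f -> polyfun u ->
  (forall v, v i0 = 0 -> u v != 0) -> xpow_dvd m (fun v => f v * u v) -> xpow_dvd m f.
Proof.
move=> + pu u0; elim: m f => [|m IH] f pf.
  by move=> _; exists f; split=> // v; rewrite expr0 mul1r.
case=> g [pg eg].
have f0 v : v i0 = 0 -> f v = 0.
  move=> v0; apply/eqP; rewrite -(mulIr_eq0 _ (mulIf (u0 v v0))) eg v0.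
  by rewrite expr0n mul0r.
have [f1 [pf1 ef1]] := xpow_dvd_vanish pf f0.
have ef1u v : f1 v * u v - v i0 ^+ m * g v = 0.
  apply: (polyfun_eq0 (f := fun v => f1 v * u v - v i0 ^+ m * g v)) => [|{}v v0].
    exact: polyfunB (polyfunM pf1 pu) (polyfunM (polyfunX _ (polyfun_coord i0)) pg).
  apply: (mulfI v0); rewrite mulr0 mulrBr mulrA -[v i0 * f1 v]expr1 -ef1 mulrA -exprS.
  by rewrite -eg subrr.
have [h [ph eh]] : xpow_dvd m f1.
  apply: IH => //; exists g; split=> // v.
  by apply/eqP; rewrite -subr_eq0 ef1u.
by exists h; split=> // v; rewrite ef1 eh mulrA -exprD add1n.
Qed.

End CoordinateDivisibility.

Section BinaryForm.
Variables (R : comNzRingType) (d : nat) (a : nat -> R).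
Local Notation F := (binform d a).

Definition binform_dq (x u y : R) : R :=
  \sum_(i < d) y ^+ (d.-1 - i) * u ^+ i +
  \sum_(1 <= i < d.+1) a i * x ^+ i * \sum_(j < d - i) y ^+ ((d - i).-1 - j) * u ^+ j.

Lemma binform_dqP x u y : (y - u) * binform_dq x u y = F x y - F x u.
Proof.
rewrite /binform_dq /binform mulrDr -subrXX mulr_sumr.
under eq_bigr => i _ do rewrite mulrCA -subrXX mulrBr.
by rewrite sumrB; ring.
Qed.

Lemma binform_x0 y : F 0 y = y ^+ d.
Proof.
rewrite /binform big_nat_cond big1 ?addr0 // => i /andP [/andP [i1 _] _].
by rewrite expr0n eqn0Ngt i1 mulr0 mul0r.
Qed.

Lemma binform_dq_x0 u : (0 < d)%N -> binform_dq 0 u u = d%:R * u ^+ d.-1.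
Proof.
move=> d0; rewrite /binform_dq [X in _ + X]big_nat_cond [X in _ + X]big1 => [|i].
  rewrite addr0 (eq_bigr (fun _ => u ^+ d.-1)) ?sumr_const ?card_ord ?mulr_natl //.
  by move=> -[i /= lt_id] _; rewrite -exprD subnK // -ltnS prednK.
by case/andP=> /andP [i1 _] _; rewrite expr0n eqn0Ngt i1 mulr0 mul0r.
Qed.

End BinaryForm.

Section Vectors.
Variable K : fieldType.

Definition vec n (l : seq K) : 'I_n -> K := fun i => nth 0 l i.

Lemma vec_inord n l k : (k <= n)%N -> vec l (inord k : 'I_n.+1) = nth 0 l k.
Proof. by move=> le_kn; rewrite /vec inordK. Qed.

Lemma vec_eta n (c : 'I_n.+1 -> K) : vec [seq c (inord k) | k <- iota 0 n.+1] = c.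
Proof.
apply: functional_extensionality => i; rewrite /vec (nth_map 0) ?size_iota //.
by rewrite nth_iota // add0n inord_val.
Qed.

End Vectors.

Section Gluing.
Variables (K : fieldType) (d r s : nat) (p p' : K -> {poly K}) (Y : ('I_4 -> K) -> Prop).

Variable Phi : K -> ('I_3 -> K) -> 'I_4 -> K.
Hypothesis Phi_poly : forall w i, inH d w -> polyfun (fun c => Phi w c i).
Hypothesis Phi_in : forall w c, inH d w -> Y (Phi w c).
Hypothesis Phi_glue : forall w l c c', inH d w -> inH d l ->
  Wrel r s p p' w c l c' -> Phi w c = Phi l c'.
Hypothesis Phi_inj : forall w l c c', inH d w -> inH d l ->
  Phi w c = Phi l c' -> Wrel r s p p' w c l c'.

Definition local_section w (g : ('I_4 -> K) -> K) (N : 'I_3 -> ('I_4 -> K) -> K) :=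
  [/\ inH d w, polyfun g, forall i, polyfun (N i) &
      forall y, Y y -> g y != 0 -> Phi w (fun i => N i y / g y) = y].

Lemma W_iso_of_local_sections (J : nat) (U : 'I_J -> ('I_4 -> K) -> Prop) :
  (forall y, Y y -> exists j, U j y) ->
  (forall j, exists w g N, local_section w g N /\ forall y, Y y -> U j y -> g y != 0) ->
  W_iso d r s p p' Y.
Proof.
move=> coverU sections.
have [PhiP hPhiP] : exists PhiP : K -> 'I_4 -> {mpoly K[3]},
    forall w, inH d w -> forall c, evalv (PhiP w) c = Phi w c.
  apply: (ClassicalEpsilon.choice (fun w P => inH d w -> forall c, evalv P c = Phi w c)) => w.
  case: (eqVneq (w ^+ d) 1) => [Hw|nHw]; last first.
    by exists (fun _ => 0) => /eqP; rewrite (negbTE nHw).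
  have /fin_all_exists [P hP] := fun i => Phi_poly i Hw.
  by exists P => _ c; apply: functional_extensionality => i; rewrite /evalv hP.
have /fin_all_exists [w /fin_all_exists [g /fin_all_exists [N hN]]] := sections.
have /fin_all_exists [G hG] : forall j, exists P : {mpoly K[4]}, forall y, P.@[y] = g j y.
  by move=> j; case: (hN j) => -[].
have /fin_all_exists [NP hNP] : forall j, exists P : 'I_3 -> {mpoly K[4]},
    forall i y, (P i).@[y] = N j i y.
  move=> j; case: (hN j) => -[_ _ pN _] _.
  by have /fin_all_exists [P hP] := pN; exists P.
have Hw j : inH d (w j) by case: (hN j) => -[].
have sec j y : Y y -> (G j).@[y] != 0 ->
    Phi (w j) (fun i => (NP j i).@[y] / (G j).@[y]) = y.
  move=> Yy; rewrite hG => gj; case: (hN j) => -[_ _ _ sec_j] _.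
  rewrite -[RHS](sec_j y Yy gj); congr Phi.
  by apply: functional_extensionality => i; rewrite hNP.
exists PhiP, J, G, w, NP => /=.
do !split.
- by move=> o c Ho; rewrite hPhiP //; apply: Phi_in.
- by move=> o l c c' Ho Hl Hc; rewrite !hPhiP //; apply: Phi_glue.
- exact: Hw.
- move=> y Yy; have [j Uj] := coverU y Yy.
  by exists j; rewrite hG; case: (hN j) => _; apply.
- by move=> y j j' Yy gj gj'; apply: Phi_inj => //; rewrite !sec.
- by move=> y j Yy gj; rewrite hPhiP // sec.
- move=> o c j Ho; rewrite hPhiP // => gj; apply: Phi_inj => //.
  by rewrite sec //; apply: Phi_in.
Qed.

End Gluing.

Section Swap.
Variable K : fieldType.

Definition swap12 : 'S_3 := tperm (inord 1) (inord 2).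

Lemma swap12_0 : swap12 (inord 0) = inord 0.
Proof. by rewrite tpermD // -val_eqE /= !inordK. Qed.

Lemma Wrel_swap r s (p p' : K -> {poly K}) w l (c c' : 'I_3 -> K) :
  Wrel s r p' p w c l c' ->
  Wrel r s p p' w (fun i => c (swap12 i)) l (fun i => c' (swap12 i)).
Proof.
rewrite /Wrel /= swap12_0 tpermL tpermR.
by case=> [[wl cc']|[x0 e0 e1 e2]]; [left|right].
Qed.

Lemma W_iso_swap d r s (p p' : K -> {poly K}) (Y : ('I_4 -> K) -> Prop) :
  W_iso d s r p' p Y -> W_iso d r s p p' Y.
Proof.
case=> Phi [J [g [w [N /= [Phi_in [Phi_glue [Hw [cover [psi_glue [PhiK PsiK]]]]]]]]]].
pose sw := [tuple ('X_(swap12 i) : {mpoly K[3]}) | i < 3].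
have evsw o c : evalv (fun i => Phi o i \mPo sw) c = evalv (Phi o) (fun i => c (swap12 i)).
  apply: functional_extensionality => i; rewrite /evalv comp_mpoly_meval.
  by apply: meval_eq => j; rewrite tnth_mktuple mevalXU.
have swK (c : 'I_3 -> K) : (fun i => c (swap12 (swap12 i))) = c.
  by apply: functional_extensionality => i; rewrite tpermK.
exists (fun o i => Phi o i \mPo sw), J, g, w, (fun j i => N j (swap12 i)) => /=.
do !split => //.
- by move=> o c Ho; rewrite evsw; apply: Phi_in.
- by move=> o l c c' Ho Hl /Wrel_swap; rewrite !evsw; apply: Phi_glue.
- by move=> y j j' Yy gj gj'; exact: (Wrel_swap (psi_glue y j j' Yy gj gj')).
- move=> y j Yy gj; rewrite evsw -[RHS](PhiK y j Yy gj); congr evalv.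
  by apply: functional_extensionality => i /=; rewrite tpermK.
- move=> o c j Ho; rewrite evsw => gj.
  by have /= := Wrel_swap (PsiK o _ j Ho gj); rewrite swK.
Qed.

End Swap.

Section Construction.
Variables (K : fieldType) (d r s : nat) (a : nat -> K) (p q p' : K -> {poly K}) (L : seq K).
Hypothesis char0 : [pchar K] =i pred0.
Hypotheses (d_gt0 : (0 < d)%N) (r_gt0 : (0 < r)%N).
Hypothesis p_at0 : forall w, inH d w -> (p w).[0] = w.
Hypothesis q_def : forall w, inH d w -> forall x,
  x ^+ r * (q w).[x] = 1 - binform d a x (p w).[x].

Hypotheses (L_uniq : uniq L) (mem_L : forall w, (w \in L) = (w ^+ d == 1)).

Local Notation F := (binform d a).

Definition dquot w x y := binform_dq d a x (p w).[x] y.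
Definition chart_y w x c := (p w).[x] + x ^+ r * c.
Definition chart_z w x c := (q w).[x] - c * dquot w x (chart_y w x c).

Lemma inH_neq0 (w : K) : inH d w -> w != 0.
Proof.
move=> Hw; apply/eqP => w0; move: Hw; rewrite /inH w0 expr0n eqn0Ngt d_gt0.
by move/esym/eqP; rewrite oner_eq0.
Qed.

Lemma dquot_root w : inH d w -> dquot w 0 w = d%:R * w ^+ d.-1.
Proof. by move=> Hw; rewrite /dquot p_at0 // binform_dq_x0. Qed.

Lemma dquot_root_neq0 w : inH d w -> dquot w 0 w != 0.
Proof.
move=> Hw; rewrite dquot_root //.
by rewrite mulf_neq0 ?expf_neq0 ?(inH_neq0 Hw) // ((pcharf0P K).1 char0) -lt0n.
Qed.

Lemma chart_y_x0 w c : inH d w -> chart_y w 0 c = w.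
Proof. by move=> Hw; rewrite /chart_y p_at0 // expr0n eqn0Ngt r_gt0 mul0r addr0. Qed.

Lemma chart_on_surface w x c : inH d w -> x ^+ r * chart_z w x c + F x (chart_y w x c) = 1.
Proof.
move=> Hw; have := binform_dqP d a x (p w).[x] (chart_y w x c).
rewrite -/(dquot _ _ _) {1}/chart_y addrAC subrr add0r /chart_z mulrBr q_def //.
by move=> dq; rewrite mulrA dq; ring.
Qed.

Lemma chart_z_of_y w x c y z : inH d w -> x != 0 -> x ^+ r * z + F x y = 1 ->
  chart_y w x c = y -> chart_z w x c = z.
Proof.
move=> Hw x0 surf yc; apply: (mulfI (expf_neq0 r x0)); apply: (addIr (F x y)).
by rewrite surf -yc chart_on_surface.
Qed.

Lemma chart_y_glue w l x c c' : x != 0 ->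
  chart_y l x c' = chart_y w x c <-> c' = c + ((p w).[x] - (p l).[x]) / x ^+ r.
Proof.
move=> x0; have xr0 := expf_neq0 r x0; rewrite /chart_y; split=> [yc|->]; last by field.
by apply: (mulfI xr0); rewrite mulrDr mulrCA divff // mulr1; apply: (addrI (p l).[x]);
  rewrite yc; ring.
Qed.

Lemma chart_z_glue w l x c c' : inH d w -> inH d l -> x != 0 ->
  chart_y l x c' = chart_y w x c -> chart_z l x c' = chart_z w x c.
Proof. by move=> Hw Hl x0 yc; apply: chart_z_of_y (chart_on_surface _ _ Hw) _. Qed.

Lemma chart_inj_x0 w l c c' : inH d w -> inH d l ->
  chart_y w 0 c = chart_y l 0 c' -> chart_z w 0 c = chart_z l 0 c' -> w = l /\ c = c'.
Proof.
move=> Hw Hl; rewrite !chart_y_x0 // => wl; subst l.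
rewrite /chart_z !chart_y_x0 // => /addrI/oppr_inj; split=> //.
exact: mulIf (dquot_root_neq0 Hw) _ _ _.
Qed.

Lemma surface_x0 y z : 0 ^+ r * z + F 0 y = 1 -> inH d y.
Proof. by rewrite binform_x0 expr0n eqn0Ngt r_gt0 mul0r add0r. Qed.

Lemma dquot_section l x y z : inH d l -> x ^+ r * z + F x y = 1 ->
  dquot l x y != 0 ->
  chart_y l x (((q l).[x] - z) / dquot l x y) = y /\
  chart_z l x (((q l).[x] - z) / dquot l x y) = z.
Proof.
move=> Hl surf dq0.
have e : x ^+ r * ((q l).[x] - z) = (y - (p l).[x]) * dquot l x y.
  by rewrite binform_dqP mulrBr q_def // -surf; ring.
have yc : chart_y l x (((q l).[x] - z) / dquot l x y) = y.
  by rewrite /chart_y mulrA e mulfK // addrC subrK.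
by split=> //; rewrite /chart_z yc divfK // subKr.
Qed.

Lemma xpow_section w x y z : inH d w -> x ^+ r * z + F x y = 1 -> x != 0 ->
  chart_y w x ((y - (p w).[x]) / x ^+ r) = y /\ chart_z w x ((y - (p w).[x]) / x ^+ r) = z.
Proof.
move=> Hw surf x0.
have yc : chart_y w x ((y - (p w).[x]) / x ^+ r) = y.
  by rewrite /chart_y mulrC divfK ?expf_neq0 // addrC subrK.
by split=> //; apply: chart_z_of_y surf yc.
Qed.

Definition sel w x y := dquot w x y / (d%:R * w ^+ d.-1).
Definition sel_s w x y := (1 - (1 - sel w x y) ^+ s) ^+ s.
Definition interp x y := \sum_(mu <- L) (p' mu).[x] * sel_s mu x y.

Definition pullback w (f : K -> K -> K) (v : 'I_2 -> K) :=
  f (v ord0) (chart_y w (v ord0) (v ord_max)).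

Lemma bipolyfun_dquot w : bipolyfun (dquot w).
Proof.
have px : polyfun (fun v : 'I_2 -> K => v ord0) := polyfun_coord _.
have py : polyfun (fun v : 'I_2 -> K => v ord_max) := polyfun_coord _.
have pu := polyfun_horner (p w) px.
apply: polyfunD; apply: polyfun_sum => i.
  exact: polyfunM (polyfunX _ py) (polyfunX _ pu).
apply: polyfunM; first exact: polyfunM (polyfun_cst _) (polyfunX _ px).
by apply: polyfun_sum => j; apply: polyfunM (polyfunX _ py) (polyfunX _ pu).
Qed.

Lemma bipolyfun_sel w : bipolyfun (sel w).
Proof. exact: polyfunM (bipolyfun_dquot w) (polyfun_cst _). Qed.

Lemma polyfun_pullback w f : bipolyfun f -> polyfun (pullback w f).
Proof.
have px : polyfun (fun v : 'I_2 -> K => v ord0) := polyfun_coord _.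
have pc : polyfun (fun v : 'I_2 -> K => v ord_max) := polyfun_coord _.
move=> pf; apply: (bipolyfun_comp pf px).
exact: polyfunD (polyfun_horner _ px) (polyfunM (polyfunX _ px) pc).
Qed.

Lemma polyfun_chart_z w : polyfun (fun v : 'I_2 -> K => chart_z w (v ord0) (v ord_max)).
Proof.
apply: polyfunB; first exact: polyfun_horner _ (polyfun_coord _).
exact: polyfunM (polyfun_coord _) (polyfun_pullback w (bipolyfun_dquot w)).
Qed.

Lemma xpow_dvd_sel_self w : inH d w -> xpow_dvd ord0 1 (pullback w (fun x y => 1 - sel w x y)).
Proof.
move=> Hw; apply: xpow_dvd_vanish.
  by apply: polyfun_pullback; apply: polyfunB (polyfun_cst _) (bipolyfun_sel w).
move=> v v0; rewrite /pullback v0 chart_y_x0 // /sel -dquot_root // divff ?subrr //.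
exact: dquot_root_neq0.
Qed.

Lemma xpow_dvd_dquot_other mu w : inH d mu -> inH d w -> mu != w ->
  xpow_dvd ord0 r (pullback w (dquot mu)).
Proof.
move=> Hmu Hw muw.
apply: (xpow_dvd_cancel char0 (u := pullback w (fun x y => y - (p mu).[x]))).
- exact/polyfun_pullback/bipolyfun_dquot.
- apply/polyfun_pullback/polyfunB; first exact: polyfun_coord.
  exact: polyfun_horner _ (polyfun_coord _).
- by move=> v v0; rewrite /pullback v0 chart_y_x0 // p_at0 // subr_eq0 eq_sym.
exists (fun v => (q mu).[v ord0] - chart_z w (v ord0) (v ord_max)); split.
  exact: polyfunB (polyfun_horner _ (polyfun_coord _)) (polyfun_chart_z w).
move=> v; rewrite /pullback mulrC binform_dqP mulrBr q_def //.
by rewrite -(chart_on_surface (v ord0) (v ord_max) Hw); ring.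
Qed.

Lemma xpow_dvd_sel_s_self w : inH d w -> xpow_dvd ord0 s (pullback w (fun x y => 1 - sel_s w x y)).
Proof.
move=> Hw; have := xpow_dvd_1subX s (xpow_dvdX s (xpow_dvd_sel_self Hw)); rewrite mul1n.
by move/xpow_dvd_eq; apply.
Qed.

Lemma xpow_dvd_sel_s_other mu w : inH d mu -> inH d w -> mu != w ->
  xpow_dvd ord0 s (pullback w (sel_s mu)).
Proof.
move=> Hmu Hw muw.
have dsel : xpow_dvd ord0 1 (pullback w (sel mu)).
  apply: xpow_dvd_leq r_gt0 _.
  have := xpow_dvdMl (polyfun_cst (d%:R * mu ^+ d.-1)^-1) (xpow_dvd_dquot_other Hmu Hw muw).
  by move/xpow_dvd_eq; apply=> v; rewrite mulrC.
by have := xpow_dvdX s (xpow_dvd_1subX s dsel); rewrite mul1n.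
Qed.

Lemma xpow_dvd_interp w : inH d w ->
  xpow_dvd ord0 s (fun v => (p' w).[v ord0] - pullback w interp v).
Proof.
move=> Hw; have wL : w \in L by rewrite mem_L; apply/eqP.
have pp' mu : polyfun (fun v : 'I_2 -> K => (p' mu).[v ord0]).
  exact: polyfun_horner _ (polyfun_coord _).
have dself := xpow_dvdMl (pp' w) (xpow_dvd_sel_s_self Hw).
have dother : xpow_dvd ord0 s (fun v => \sum_(mu <- L | mu != w)
    (p' mu).[v ord0] * pullback w (sel_s mu) v).
  apply: xpow_dvd_sum => mu muL muw; apply: xpow_dvdMl (pp' mu) _.
  by apply: xpow_dvd_sel_s_other muw => //; apply/eqP; rewrite -mem_L.
apply: xpow_dvd_eq (xpow_dvdD dself (xpow_dvdN dother)) _ => v.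
by rewrite /pullback /interp (bigD1_seq w) //=; ring.
Qed.

Lemma exists_shift : exists shift : K -> K -> K -> K, forall w, inH d w ->
  bipolyfun (shift w) /\ forall x c, x ^+ s * shift w x c = (p' w).[x] - interp x (chart_y w x c).
Proof.
apply: (ClassicalEpsilon.choice (fun w S => inH d w -> bipolyfun S /\
  forall x c, x ^+ s * S x c = (p' w).[x] - interp x (chart_y w x c))) => w.
case: (eqVneq (w ^+ d) 1) => [Hw|nHw]; last by exists (fun _ _ => 0) => /eqP; rewrite (negbTE nHw).
have [g [pg eg]] := xpow_dvd_interp Hw.
exists (fun x c => g (pt2 x c)) => _; split=> [|x c].
  by apply: polyfun_eq pg _ => v; rewrite pt2_eta.
by rewrite [RHS](eg (pt2 x c)).
Qed.

Section Cylinder.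
Variable shift : K -> K -> K -> K.
Hypothesis shift_poly : forall w, inH d w -> bipolyfun (shift w).
Hypothesis shift_def : forall w, inH d w -> forall x c,
  x ^+ s * shift w x c = (p' w).[x] - interp x (chart_y w x c).

Lemma shift_glue w l x c c' : inH d w -> inH d l -> x != 0 ->
  chart_y l x c' = chart_y w x c -> shift w x c - shift l x c' = ((p' w).[x] - (p' l).[x]) / x ^+ s.
Proof.
move=> Hw Hl x0 yc; have xs0 := expf_neq0 s x0.
apply: (mulfI xs0); rewrite mulrBr !shift_def // yc [RHS]mulrC divfK //; ring.
Qed.

Definition Phi w (c : 'I_3 -> K) : 'I_4 -> K :=
  vec [:: c (inord 0); chart_y w (c (inord 0)) (c (inord 1)); chart_z w (c (inord 0)) (c (inord 1));
          c (inord 2) + shift w (c (inord 0)) (c (inord 1))].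

Lemma Phi_poly w i : inH d w -> polyfun (fun c => Phi w c i).
Proof.
move=> Hw; have px : polyfun (fun c : 'I_3 -> K => c (inord 0)) := polyfun_coord _.
have pc : polyfun (fun c : 'I_3 -> K => c (inord 1)) := polyfun_coord _.
case: i => -[|[|[|[|//]]]] ? /=.
- exact: px.
- have py := polyfun_pullback w (f := fun _ y => y) (polyfun_coord _).
  exact: (bipolyfun_comp (f := chart_y w) py).
- exact: (bipolyfun_comp (f := chart_z w) (polyfun_chart_z w)).
- exact: polyfunD (polyfun_coord _) (bipolyfun_comp (shift_poly Hw) px pc).
Qed.

Lemma Phi_in w c : inH d w -> XA1pt d r a (Phi w c).
Proof. by move=> Hw; rewrite /XA1pt /Phi !vec_inord //= chart_on_surface. Qed.

Lemma Phi_glue w l c c' : inH d w -> inH d l -> Wrel r s p p' w c l c' -> Phi w c = Phi l c'.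
Proof.
move=> Hw Hl [[<- cc']|[x0 e0 e1 e2]].
  by congr Phi; apply: functional_extensionality.
have yc : chart_y l (c (inord 0)) (c' (inord 1)) = chart_y w (c (inord 0)) (c (inord 1)).
  exact/chart_y_glue.
rewrite /Phi e0 yc (chart_z_glue Hw Hl x0 yc) e2 -addrA -(shift_glue Hw Hl x0 yc).
by rewrite subrK.
Qed.

Lemma Phi_inj w l c c' : inH d w -> inH d l -> Phi w c = Phi l c' -> Wrel r s p p' w c l c'.
Proof.
move=> Hw Hl E.
have [e0 e1 e2 e3] : [/\ c (inord 0) = c' (inord 0),
    chart_y w (c (inord 0)) (c (inord 1)) = chart_y l (c (inord 0)) (c' (inord 1)),
    chart_z w (c (inord 0)) (c (inord 1)) = chart_z l (c (inord 0)) (c' (inord 1)) &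
    c (inord 2) + shift w (c (inord 0)) (c (inord 1)) =
    c' (inord 2) + shift l (c (inord 0)) (c' (inord 1))].
  have Ek k : (k <= 3)%N -> Phi w c (inord k) = Phi l c' (inord k) by rewrite E.
  have e0 := Ek 0%N isT; rewrite /Phi !vec_inord //= in e0.
  split=> //; [move: (Ek 1%N isT)|move: (Ek 2%N isT)|move: (Ek 3%N isT)];
    by rewrite /Phi !vec_inord //= -e0.
case: (eqVneq (c (inord 0)) 0) => [x0|x0]; [left|right]; last first.
  split=> //; first exact/(chart_y_glue _ _ _ _ x0)/esym.
  by rewrite -(shift_glue Hw Hl x0 (esym e1)) addrA e3 addrK.
rewrite x0 in e1 e2 e3; have [wl c11] := chart_inj_x0 Hw Hl e1 e2; subst l.
split=> // i; rewrite -(inord_val i); case: i => -[|[|[|//]]] ? //=.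
by move: e3; rewrite c11 => /addIr.
Qed.

Lemma Phi_chart w x c y z t : chart_y w x c = y -> chart_z w x c = z ->
  Phi w (vec [:: x; c; t - shift w x c]) = vec [:: x; y; z; t].
Proof. by move=> <- <-; rewrite /Phi !vec_inord //= subrK. Qed.

Lemma local_section_of w (B C : ('I_4 -> K) -> K) : inH d w -> polyfun B -> polyfun C ->
  (forall y, XA1pt d r a y -> B y != 0 ->
     chart_y w (y (inord 0)) (C y / B y) = y (inord 1) /\
     chart_z w (y (inord 0)) (C y / B y) = y (inord 2)) ->
  exists g N, local_section d (XA1pt d r a) Phi w g N /\ forall y, (g y != 0) = (B y != 0).
Proof.
move=> Hw pB pC BC.
pose N (j : 'I_3) y := vec [:: y (inord 0) * B y; C y; y (inord 3) * B y] j.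
pose psi (i : 'I_3) (c : 'I_3 -> K) :=
  vec [:: c (inord 0); c (inord 1); c (inord 2) - shift w (c (inord 0)) (c (inord 1))] i.
have [||g [N' [pg pN' gB eN']]] := polyfun_clear_denominators (N := N) (psi := psi) pB.
- by case=> -[|[|[|//]]] ? /=; rewrite /N /vec /=;
    [apply: polyfunM (polyfun_coord _) pB|apply: pC|apply: polyfunM (polyfun_coord _) pB].
- case=> -[|[|[|//]]] ? /=; rewrite /psi /vec /=; try exact: polyfun_coord.
  by apply: polyfunB (polyfun_coord _) (bipolyfun_comp (shift_poly Hw) _ _); apply: polyfun_coord.
exists g, N'; split=> //; split=> // y Yy gy; have By : B y != 0 by rewrite -gB.
have [yc zc] := BC y Yy By.
have -> : (fun i => N' i y / g y) = vec [:: y (inord 0); C y / B y;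
    y (inord 3) - shift w (y (inord 0)) (C y / B y)].
  by apply: functional_extensionality => i; rewrite eN' // /psi /N !vec_inord //= !mulfK.
by rewrite (Phi_chart _ yc zc) -[RHS]vec_eta.
Qed.

Lemma local_section_dquot l : inH d l -> exists g N, local_section d (XA1pt d r a) Phi l g N /\
  forall y, (g y != 0) = (dquot l (y (inord 0)) (y (inord 1)) != 0).
Proof.
move=> Hl; have px : polyfun (fun y : 'I_4 -> K => y (inord 0)) := polyfun_coord _.
apply: (local_section_of (C := fun y => (q l).[y (inord 0)] - y (inord 2)) Hl) => [||y Yy].
- exact: bipolyfun_comp (bipolyfun_dquot l) px (polyfun_coord _).
- exact: polyfunB (polyfun_horner _ px) (polyfun_coord _).
- exact: dquot_section.
Qed.

Lemma local_section_xpow : exists g N, local_section d (XA1pt d r a) Phi 1 g N /\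
  forall y, (g y != 0) = (y (inord 0) != 0).
Proof.
have H1 : inH d (1 : K) by rewrite /inH expr1n.
have px : polyfun (fun y : 'I_4 -> K => y (inord 0)) := polyfun_coord _.
have [|||g [N [sec gB]]] := @local_section_of 1 (fun y => y (inord 0) ^+ r)
    (fun y => y (inord 1) - (p 1).[y (inord 0)]) H1.
- exact: polyfunX.
- exact: polyfunB (polyfun_coord _) (polyfun_horner _ px).
- by move=> y Yy; rewrite expf_eq0 r_gt0 /=; apply: xpow_section.
by exists g, N; split=> // y; rewrite gB expf_eq0 r_gt0.
Qed.

End Cylinder.

Lemma W_iso_XA1 : W_iso d r s p p' (XA1pt d r a).
Proof.
have [shift hshift] := exists_shift.
have shift_poly w (Hw : inH d w) := (hshift w Hw).1.
have shift_def w (Hw : inH d w) := (hshift w Hw).2.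
pose U (j : 'I_(size L).+1) (y : 'I_4 -> K) := if (j < size L)%N
  then y (inord 0) = 0 /\ y (inord 1) = nth 0 L j else y (inord 0) != 0.
apply: (@W_iso_of_local_sections _ _ _ _ _ _ _ (Phi shift) _ _ _ _ _ U).
- by move=> w i; apply: Phi_poly.
- by move=> w c; apply: Phi_in.
- by move=> w l c c'; apply: Phi_glue.
- by move=> w l c c'; apply: Phi_inj.
- move=> y Yy; case: (eqVneq (y (inord 0)) 0) => [x0|x0]; last by exists ord_max; rewrite /U ltnn.
  have y1L : y (inord 1) \in L.
    by rewrite mem_L; apply/eqP/(surface_x0 (z := y (inord 2))); rewrite -x0.
  exists (inord (index (y (inord 1)) L)).
  by rewrite /U inordK ?ltnS ?index_size // index_mem y1L nth_index.
- move=> j; rewrite /U; case: ltnP => [jL|_].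
    have Hl : inH d (nth 0 L j) by apply/eqP; rewrite -mem_L mem_nth.
    have [g [N [sec gB]]] := local_section_dquot shift_poly Hl.
    by exists (nth 0 L j), g, N; split=> // y _ [y0 y1]; rewrite gB y0 y1 dquot_root_neq0.
  have [g [N [sec gB]]] := local_section_xpow shift_poly.
  by exists 1, g, N; split=> // y _; rewrite gB.
Qed.

End Construction.

Lemma pspec_quotient (K : fieldType) d r (a : nat -> K) w P : pspec d r a w P ->
  exists Q : {poly K}, forall x, x ^+ r * Q.[x] = 1 - binform d a x P.[x].
Proof.
case=> _ _ /dvdpP [Q EQ]; exists Q => x; rewrite mulrC -hornerXn -hornerM -EQ.
rewrite !hornerE horner_sum /binform; congr (1 - (_ + _)).
by apply: eq_bigr => i _; rewrite hornerZ hornerM hornerXn horner_exp mulrA.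
Qed.

Lemma roots_of_unity_seq (K : closedFieldType) d : (0 < d)%N ->
  exists L : seq K, uniq L /\ forall w, (w \in L) = (w ^+ d == 1).
Proof.
move=> d_gt0; have [rs Ers] := closed_field_poly_normal ('X^d - 1 : {poly K}).
have lc : lead_coef ('X^d - 1 : {poly K}) != 0.
  by rewrite lead_coefXnsubC // oner_neq0.
exists (undup rs); split=> [|w]; first exact: undup_uniq.
rewrite mem_undup -root_prod_XsubC -(rootZ _ _ lc) -Ers.
by rewrite /root !hornerE subr_eq0.
Qed.

Lemma W_iso_of_pspec (K : fieldType) (L : seq K) d r s a (p p' : K -> {poly K}) :
  [pchar K] =i pred0 -> (0 < d)%N -> (0 < r)%N ->
  uniq L -> (forall w, (w \in L) = (w ^+ d == 1)) ->
  (forall w, inH d w -> pspec d r a w (p w)) -> W_iso d r s p p' (XA1pt d r a).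
Proof.
move=> char0 d_gt0 r_gt0 L_uniq mem_L hp.
have p_at0 w : inH d w -> (p w).[0] = w by case/hp.
have [q q_def] : exists q : K -> {poly K}, forall w, inH d w -> forall x,
    x ^+ r * (q w).[x] = 1 - binform d a x (p w).[x].
  apply: (ClassicalEpsilon.choice (fun w Q => inH d w -> forall x,
    x ^+ r * Q.[x] = 1 - binform d a x (p w).[x])) => w.
  case: (eqVneq (w ^+ d) 1) => [Hw|nHw]; last by exists 0 => /eqP; rewrite (negbTE nHw).
  by have [Q EQ] := pspec_quotient (hp w Hw); exists Q.
exact: (W_iso_XA1 s p' char0 d_gt0 r_gt0 p_at0 q_def L_uniq mem_L).
Qed.

Theorem theorem1p4p23 (k : closedFieldType) (char0 : [pchar k] =i pred0)
    (d r s : nat) (hd : (2 <= d)%N) (hr : (1 <= r)%N) (hs : (1 <= s)%N)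
    (a a' : nat -> k) (p p' : k -> {poly k})
    (hp : forall w : k, inH d w -> pspec d r a w (p w))
    (hp' : forall w : k, inH d w -> pspec d s a' w (p' w)) :
  W_iso d r s p p' (XA1pt d r a) /\ W_iso d r s p p' (XA1pt d s a').
Proof.
have d_gt0 : (0 < d)%N := ltnW hd.
have [L [L_uniq mem_L]] := roots_of_unity_seq k d_gt0.
split; first exact: (W_iso_of_pspec s p' char0 d_gt0 hr L_uniq mem_L hp).
exact/W_iso_swap/(W_iso_of_pspec r p char0 d_gt0 hs L_uniq mem_L hp').
Qed.
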